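(* Let $n\ge2$. (1) The set $X=\overline{(1+2^n)^{\mathbb{N}}}$ equals $1+2^n\mathbb{N}_0$ and $i(X)=2^{n-1}$. (2) The set $Y=\overline{(-1+2^n)^{\mathbb{N}}}$ equals $(1+2^{n+1}\mathbb{N}_0)\cup(2^n-1+2^{n+1}\mathbb{N}_0)$ and $i(Y)=2^{n-1}$.
   Context: $\mathbb{N}=\{1,2,\dots\}$, $\mathbb{N}_0=\{0\}\cup\mathbb{N}$, $x^{\mathbb{N}}=\{x^k:k\in\mathbb{N}\}$. Closures are taken in the $2$-adic topology on $\mathbb{N}\setminus2\mathbb{N}$ (generated by the sets $x+2^m\mathbb{N}_0$). $\mathbb{Z}_{2^m}^\times$ is the unit group of $\mathbb{Z}/2^m\mathbb{Z}$, $\pi_m:\mathbb{N}\to\mathbb{Z}/2^m\mathbb{Z}$, $x\mapsto x+2^m\mathbb{Z}$. For $X$ of the form $\overline{b^{\mathbb{N}}}$ with $b$ odd, $b\ne1$: $n(X)=\min\{m\in\mathbb{N}:X=\pi_m^{-1}(\pi_m(X)),\ |\pi_m(X)|\ge3\}$ and $i(X)$ is the index of $\pi_{n(X)}(X)$ in $\mathbb{Z}_{2^{n(X)}}^\times$. *)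

From HB Require Import structures.
From mathcomp Require Import all_boot all_algebra all_fingroup all_solvable.
From mathcomp Require Import boolp classical_sets.
Set Implicit Arguments. Unset Strict Implicit. Unset Printing Implicit Defensive.

Local Open Scope classical_set_scope.

Definition basic_open (z m : nat) : set nat :=
  [set y | (z <= y)%N /\ y = z %[mod 2 ^ m]].

(* Closure in the 2-adic topology on N \ 2N generated by the sets
   z + 2^m N_0 (z odd, m in N = {1,2,...}): x is in the closure of A iff
   every basic open set containing x meets A. *)
Definition adic_closure (A : set nat) : set nat :=
  [set x | odd x /\ forall z m, odd z -> (0 < m)%N -> basic_open z m x ->
             exists a, A a /\ basic_open z m a].

Definition powers (b : nat) : set nat := [set x | exists k, (0 < k)%N /\ x = b ^ k].

Definition pi_img (m : nat) (X : set nat) : {set 'Z_(2 ^ m)} :=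
  [set r : 'Z_(2 ^ m) | `[< exists x, X x /\ x %% 2 ^ m = nat_of_ord r >]].

Definition saturated (m : nat) (X : set nat) : Prop :=
  forall y, X y <-> exists x, X x /\ x = y %[mod 2 ^ m].

Definition n_good (X : set nat) (m : nat) : Prop :=
  (0 < m)%N /\ saturated m X /\ (3 <= #|pi_img m X|)%N.

Definition is_nX (X : set nat) (k : nat) : Prop :=
  n_good X k /\ forall m, n_good X m -> (k <= m)%N.

Definition unit_img (m : nat) (X : set nat) : {set {unit 'Z_(2 ^ m)}} :=
  [set u : {unit 'Z_(2 ^ m)} | val u \in pi_img m X].

Definition index_in_units (m : nat) (X : set nat) : nat :=
  #|(finset.setT : {set {unit 'Z_(2 ^ m)}}) : unit_img m X|%g.

(* For e >= 2 and u odd, a = 1 + 2^e u satisfies a^(2^j) = 1 + 2^(e+j) v with v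
   odd, so multiplying by a^(2^(m-e)) flips exactly bit m of an odd number.
   Bit by bit, the powers of a therefore meet every class x = 1 mod 2^e modulo
   every 2^m, and adding multiples of the period 2^m to the exponent makes them
   as large as we like: the closure of a^N is {x | x = 1 mod 2^e}. If
   b^2 = 1 + 2^e u, the even powers of b are the powers of b^2 and the odd ones
   are b times them, so the closure of b^N is the union of the classes of 1 and b
   mod 2^e; for b = 2^n - 1 we have e = n + 1.
   A union of s classes mod 2^e is not saturated below level e (witness
   1 + 2^(e-1)) and has 2^(m-e) s images mod 2^m for m >= e; in both cases this
   first exceeds 2 at m = n + 2, where it is 4, and Lagrange in the unit group of
   order 2^(n+1) gives the index 2^(n+1) / 4. *)

From mathcomp Require Import all_boot all_algebra all_fingroup all_solvable.
From mathcomp Require Import boolp classical_sets.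
From mathcomp Require Import zify ring.
Set Implicit Arguments. Unset Strict Implicit.

Local Open Scope classical_set_scope.

Lemma eq_modn_dvd d p x y : d %| p -> x = y %[mod p] -> x = y %[mod d].
Proof. by move=> dvd_dp eq_xy; rewrite -(modn_dvdm x dvd_dp) eq_xy modn_dvdm. Qed.

Lemma eqn_modMl_coprime d b x y :
  coprime b d -> (b * x == b * y %[mod d]) = (x == y %[mod d]).
Proof.
move=> co_bd; wlog le_yx : x y / y <= x.
  by move=> IH; case: (leqP y x) => [|/ltnW] /IH //; rewrite eq_sym [in RHS]eq_sym.
by rewrite !eqn_mod_dvd ?leq_mul2l ?le_yx ?orbT // -mulnBr Gauss_dvdr // coprime_sym.
Qed.

Lemma modn_muln2 x d : 0 < d -> x %% (d * 2) = odd (x %/ d) * d + x %% d.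
Proof.
move=> d_gt0; rewrite {1}(divn_eq x d) -{1}(odd_double_half (x %/ d)) -muln2.
rewrite mulnDl -mulnA (mulnC 2 d) addnAC addnC modnMDl modn_small //.
by case: (odd _); have := ltn_pmod x d_gt0; lia.
Qed.

Lemma eq_modn_double x y d : 0 < d -> x = y %[mod d] ->
  x = y %[mod d * 2] \/ x + d = y %[mod d * 2].
Proof.
move=> d_gt0 eq_xy; rewrite -(modnDml x d) (modn_muln2 x d_gt0) (modn_muln2 y d_gt0) eq_xy.
have := ltn_pmod y d_gt0.
case: (odd (x %/ d)); case: (odd (y %/ d)) => lt_yd; [by left | right | right | by left];
  rewrite /= ?mul0n ?mul1n ?add0n.
- by rewrite addnAC addnn -mul2n mulnC modnDl modn_small //; lia.
- by rewrite modn_small addnC //; lia.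
Qed.

Lemma expn_1_addM_mod c u k : (1 + c * u) ^ k = 1 %[mod c].
Proof. by rewrite -modnXm addnC mulnC modnMDl modnXm exp1n. Qed.

Lemma expn2_gt1 m : 0 < m -> 1 < 2 ^ m.
Proof. by case: m => // m _; rewrite expnS; have := expn_gt0 2 m; lia. Qed.

Lemma odd_exp2 e : 0 < e -> odd (2 ^ e) = false.
Proof. by move=> e_gt0; rewrite oddX (gtn_eqF e_gt0). Qed.

Lemma muln_1_addM_mod c y v : odd (y * v) -> y * (1 + c * v) = y + c %[mod c * 2].
Proof.
move=> yv_odd; rewrite mulnDr muln1 mulnCA -(odd_double_half (y * v)) yv_odd.
by rewrite -muln2 mulnDr muln1 addnA mulnCA addnC modnMDl.
Qed.

Section PowersOf1AddExp2.

Variables e u : nat.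
Hypotheses (e_ge2 : 2 <= e) (u_odd : odd u).
Local Notation a := (1 + 2 ^ e * u).

Lemma expn_exp2_lift j : exists2 v, odd v & a ^ (2 ^ j) = 1 + 2 ^ (e + j) * v.
Proof.
elim: j => [|j [v v_odd IH]]; first by exists u; rewrite ?addn0.
have ej_gt1 : 1 < e + j by lia.
exists (v + 2 ^ (e + j).-1 * v ^ 2).
  by rewrite oddD oddM oddX v_odd /=; case: (e + j) ej_gt1 => [|[|]].
rewrite expnSr expnM IH addnS (expnS 2 (e + j)).
have -> : 2 ^ (e + j) = 2 * 2 ^ (e + j).-1 by rewrite -expnS prednK // ltnW.
by move: (2 ^ (e + j).-1) => c; rewrite -!mulnn; ring.
Qed.

Lemma expn_cover_mod m x : x = 1 %[mod 2 ^ e] -> exists k, a ^ k = x %[mod 2 ^ m].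
Proof.
move=> x_1; elim: m => [|m [k IH]]; first by exists 0; rewrite !modn1.
have [le_me | lt_em] := leqP m.+1 e.
  by exists 0; apply: (eq_modn_dvd (dvdn_exp2l 2 le_me)); rewrite expn0 x_1.
have [v v_odd lift] := expn_exp2_lift (m - e).
rewrite subnKC // in lift.
have ak_odd : odd (a ^ k).
  by rewrite oddX oddD oddM oddX (gtn_eqF (ltnW e_ge2)) orbT.
rewrite expnSr; have [|ak_x] := eq_modn_double (expn_gt0 2 m) IH; first by exists k.
exists (k + 2 ^ (m - e)); rewrite expnD lift -ak_x.
by apply: muln_1_addM_mod; rewrite oddM ak_odd.
Qed.

Lemma expn_cover_mod_ge m x : x = 1 %[mod 2 ^ e] ->
  exists k, [/\ 0 < k, x <= a ^ k & a ^ k = x %[mod 2 ^ m]].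
Proof.
move=> x_1; have [k0 ak0_x] := expn_cover_mod m x_1.
have [v _ lift] := expn_exp2_lift m.
have a_gt1 : 1 < a by rewrite addnC -add1n leq_add2r muln_gt0 expn_gt0; case: (u) u_odd.
have period : a ^ (2 ^ m) = 1 %[mod 2 ^ m].
  by rewrite lift expnD mulnAC addnC modnMDl.
exists (k0 + x.+1 * 2 ^ m); split.
- by rewrite addn_gt0 muln_gt0 expn_gt0 orbT.
- apply: ltnW; apply: leq_trans (ltnW (ltn_expl _ a_gt1)).
  by rewrite ltn_addl // leq_pmulr ?expn_gt0.
- by rewrite expnD (mulnC x.+1) expnM -modnMmr -modnXm period modnXm exp1n modnMmr muln1.
Qed.

End PowersOf1AddExp2.

Definition residues (e : nat) (cs : seq nat) : set nat := [set x | x %% 2 ^ e \in cs].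

Lemma residues_saturated e cs m : e <= m -> saturated m (residues e cs).
Proof.
move=> le_em y; split=> [Ry | [x [Rx x_y]]]; first by exists y.
by rewrite /residues /= -(eq_modn_dvd (dvdn_exp2l 2 le_em) x_y).
Qed.

Lemma residues_odd e cs x : 0 < e -> all odd cs -> residues e cs x -> odd x.
Proof.
move=> e_gt0 /allP cs_odd Rx.
by rewrite -(odd_mod x (odd_exp2 e_gt0)); apply: cs_odd.
Qed.

Lemma adic_closure_eq (A S : set nat) m0 :
  0 < m0 -> saturated m0 S -> (forall x, S x -> odd x) -> A `<=` S ->
  (forall x m, S x -> exists a, [/\ A a, x <= a & a = x %[mod 2 ^ m]]) ->
  adic_closure A = S.
Proof.
move=> m0_gt0 satS S_odd sAS approx; apply/seteqP; split=> x.
  case=> x_odd near_x; have [a [Aa [_ a_x]]] := near_x x m0 x_odd m0_gt0 (conj (leqnn x) erefl).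
  by apply/satS; exists a; split; [exact: sAS |].
move=> Sx; split=> [|z m _ _ [le_zx x_z]]; first exact: S_odd.
have [a [Aa le_xa a_x]] := approx x m Sx.
by exists a; split=> //; split; [exact: leq_trans le_xa | rewrite a_x].
Qed.

Lemma adic_closure_powers_1_addM e u : 2 <= e -> odd u ->
  adic_closure (powers (1 + 2 ^ e * u)) = residues e [:: 1].
Proof.
move=> e_ge2 u_odd; have e_gt0 : 0 < e := ltnW e_ge2.
have one_lt := expn2_gt1 e_gt0.
apply: (adic_closure_eq e_gt0 (residues_saturated _ (leqnn e))).
- by move=> x; apply: residues_odd.
- by move=> _ [k [_ ->]]; rewrite /residues /= expn_1_addM_mod modn_small ?mem_seq1.
move=> x m; rewrite /residues /= inE => /eqP x_1.
have [|k [k_gt0 le_xa a_x]] := expn_cover_mod_ge e_ge2 u_odd m (x := x).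
  by rewrite x_1 modn_small.
by exists ((1 + 2 ^ e * u) ^ k); split=> //; exists k.
Qed.

Lemma expn_mod_sqr1 b d k : b ^ 2 = 1 %[mod d] ->
  b ^ k = (if odd k then b else 1) %[mod d].
Proof.
move=> b2_1; rewrite -{1}(odd_double_half k) -muln2 mulnC expnD expnM.
rewrite -modnMmr -modnXm b2_1 modnXm exp1n modnMmr muln1.
by case: (odd k).
Qed.

Lemma adic_closure_powers_sqrt e u b : 2 <= e -> odd u -> b < 2 ^ e ->
  b ^ 2 = 1 + 2 ^ e * u -> adic_closure (powers b) = residues e [:: 1; b].
Proof.
move=> e_ge2 u_odd lt_b b2; have e_gt0 : 0 < e := ltnW e_ge2.
have one_lt := expn2_gt1 e_gt0.
have b_odd : odd b by have := congr1 odd b2; rewrite oddX oddD oddM odd_exp2.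
have b2_1 : b ^ 2 = 1 %[mod 2 ^ e] by rewrite b2 addnC mulnC modnMDl.
apply: (adic_closure_eq e_gt0 (residues_saturated _ (leqnn e))).
- by move=> x; apply: residues_odd => //=; rewrite b_odd.
- move=> _ [k [_ ->]]; rewrite /residues /= (expn_mod_sqr1 k b2_1).
  by case: (odd k); rewrite modn_small // !inE eqxx ?orbT.
move=> x m; rewrite /residues /= !inE => /orP[/eqP x_1 | /eqP x_b].
  have [|k [k_gt0 le_xa a_x]] := expn_cover_mod_ge e_ge2 u_odd m (x := x).
    by rewrite x_1 modn_small.
  rewrite -b2 -expnM in le_xa a_x.
  by exists (b ^ (2 * k)); split=> //; exists (2 * k); rewrite muln_gt0.
have bx_1 : b * x = 1 %[mod 2 ^ e] by rewrite -modnMmr x_b mulnn b2_1.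
have [k [k_gt0 le_xa a_x]] := expn_cover_mod_ge e_ge2 u_odd m bx_1.
have def_2k : 2 * k = (2 * k).-1.+1 by rewrite prednK // muln_gt0.
rewrite -b2 -expnM def_2k expnS in le_xa a_x.
exists (b ^ (2 * k).-1); split.
- exists (2 * k).-1; split=> //.
  by rewrite -ltnS -def_2k; apply: (leq_mul (leqnn 2) k_gt0).
- by rewrite -(leq_pmul2l (odd_gt0 b_odd)).
- apply/eqP; rewrite -(@eqn_modMl_coprime _ b) ?coprimeXr ?coprimen2 //.
  exact/eqP.
Qed.

Lemma Zp_exp2_lt m (r : 'Z_(2 ^ m)) : 0 < m -> r < 2 ^ m.
Proof.
by move=> m_gt0; have := ltn_ord r; move: (nat_of_ord r) => k; rewrite Zp_cast ?expn2_gt1.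
Qed.

Lemma unit_img_group_set m X : 0 < m -> X 1 ->
  (forall x y, X x -> X y -> X (x * y)) -> group_set (unit_img m X).
Proof.
move=> m_gt0 X1 XM; have Zp_val := Zp_cast (expn2_gt1 m_gt0).
apply/group_setP; split.
  rewrite inE FinRing.val_unit1 inE; apply/asboolP; exists 1; split=> //.
  by rewrite /= Zp_val.
move=> x y; rewrite !inE FinRing.val_unitM => -[a [Xa a_x]] [b [Xb b_y]].
exists (a * b); split; first exact: XM.
have -> : nat_of_ord (val x * val y)%R = val x * val y %% (Zp_trunc (2 ^ m)).+2 by [].
by rewrite -a_x -b_y Zp_val modnMm.
Qed.

Lemma card_unit_img m X : 0 < m -> (forall x, X x -> odd x) ->
  #|unit_img m X| = #|pi_img m X|.
Proof.
move=> m_gt0 X_odd.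
suff <- : [set val u | u in unit_img m X]%SET = pi_img m X by rewrite card_imset //; exact: val_inj.
apply/eqP; rewrite finset.eqEsubset; apply/andP; split; apply/fintype.subsetP => r.
  by case/imsetP=> u; rewrite inE => u_in ->.
move=> r_in; have := r_in; rewrite inE => /asboolP[a [Xa a_r]].
have r_unit : r \is a GRing.unit.
  rewrite -[r]natr_Zp unitZpE ?expn2_gt1 // coprime_pexpl // coprime2n.
  by rewrite -a_r odd_mod ?odd_exp2 ?X_odd.
by apply/imsetP; exists (FinRing.Unit r_unit) => //; rewrite inE.
Qed.

Lemma card_units_Zp_exp2 m : 0 < m -> #|[set: {unit 'Z_(2 ^ m)}]%SET| = 2 ^ (m - 1).
Proof.
move=> m_gt0; have := card_units_Zp (expn_gt0 2 m); rewrite /units_Zp => ->.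
by rewrite totient_pfactor // mul1n subn1.
Qed.

Lemma card_pi_img_mul_index m X : 0 < m -> X 1 ->
  (forall x y, X x -> X y -> X (x * y)) -> (forall x, X x -> odd x) ->
  #|pi_img m X| * index_in_units m X = 2 ^ (m - 1).
Proof.
move=> m_gt0 X1 XM X_odd.
pose H := Group (unit_img_group_set m_gt0 X1 XM).
rewrite -card_unit_img // -card_units_Zp_exp2 //.
exact: Lagrange (finset.subsetT (gval H)).
Qed.

Lemma card_ord_modn_eq p N q c : 0 < N -> c < N -> p = q * N ->
  #|[set r : 'I_p | r %% N == c]%SET| = q.
Proof.
move=> N_gt0 lt_cN def_p.
have lt_p (i : 'I_q) : c + i * N < p by rewrite def_p; have := ltn_ord i; nia.
pose g i := Ordinal (lt_p i).
have g_inj : injective g.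
  move=> i j /(congr1 val) /= /eqP; rewrite eqn_add2l eqn_pmul2r // => /eqP.
  exact: val_inj.
suff -> : [set r : 'I_p | r %% N == c]%SET = (g @: [set: 'I_q])%SET.
  by rewrite card_imset // finset.cardsT card_ord.
apply/eqP; rewrite finset.eqEsubset; apply/andP; split; apply/fintype.subsetP => r.
  rewrite inE => /eqP r_c; have lt_rq : r %/ N < q by rewrite ltn_divLR // -def_p.
  apply/imsetP; exists (Ordinal lt_rq) => //.
  by apply: val_inj; rewrite /= {1}(divn_eq r N) r_c addnC.
by case/imsetP=> i _ ->; rewrite inE /= addnC modnMDl modn_small.
Qed.

Lemma card_ord_modn_in p N q cs : 0 < N -> p = q * N -> uniq cs ->
  all (fun c => c < N) cs -> #|[set r : 'I_p | r %% N \in cs]%SET| = q * size cs.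
Proof.
move=> N_gt0 def_p; elim: cs => [|c cs IH] /=.
  by move=> _ _; rewrite muln0; apply: eq_card0 => r; rewrite !inE.
case/andP=> c_notin cs_uniq /andP[lt_cN cs_lt].
have -> : [set r : 'I_p | r %% N \in c :: cs]%SET =
    ([set r : 'I_p | r %% N == c] :|: [set r : 'I_p | r %% N \in cs])%SET.
  by apply/finset.setP => r; rewrite !inE.
rewrite cardsU (card_ord_modn_eq N_gt0 lt_cN def_p) IH //.
rewrite (_ : _ :&: _ = finset.set0)%SET ?cards0 ?subn0 ?mulnS //.
apply/finset.setP => r; rewrite !inE; apply/negbTE/andP => -[/eqP r_c].
by rewrite r_c (negbTE c_notin).
Qed.

Lemma pi_img_residues e cs m : 0 < m -> e <= m ->
  pi_img m (residues e cs) = [set r : 'Z_(2 ^ m) | r %% 2 ^ e \in cs]%SET.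
Proof.
move=> m_gt0 le_em; apply/finset.setP => r; rewrite !inE; apply/asboolP/idP.
  by move=> [x [Rx <-]]; rewrite modn_dvdm ?dvdn_exp2l.
by move=> r_in; exists r; rewrite modn_small ?Zp_exp2_lt.
Qed.

Section ResidueSets.

Variables (e : nat) (cs : seq nat).
Hypotheses (e_gt0 : 0 < e) (cs_uniq : uniq cs) (cs_lt : all (fun c => c < 2 ^ e) cs).
Hypotheses (cs_odd : all odd cs) (cs1 : 1 \in cs).
Hypothesis cs_mul : {in cs &, forall c d, c * d %% 2 ^ e \in cs}.
Local Notation X := (residues e cs).

Lemma residues1 : X 1.
Proof. by rewrite /residues /= modn_small ?expn2_gt1. Qed.

Lemma residuesM x y : X x -> X y -> X (x * y).
Proof. by rewrite /residues /= -modnMm; exact: cs_mul. Qed.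

Lemma card_pi_img_residues m : e <= m -> #|pi_img m X| = 2 ^ (m - e) * size cs.
Proof.
move=> le_em; have m_gt0 := leq_trans e_gt0 le_em.
rewrite pi_img_residues //; apply: card_ord_modn_in => //; first exact: expn_gt0.
by rewrite Zp_cast ?expn2_gt1 // -expnD subnK.
Qed.

Lemma residues_unsaturated m : 0 < m -> m < e -> 1 + 2 ^ e.-1 \notin cs ->
  ~ saturated m X.
Proof.
move=> m_gt0 lt_me cs_gap sat_m.
have le_m_e1 : m <= e.-1 by rewrite -ltnS prednK.
have : X (1 + 2 ^ e.-1).
  apply/sat_m; exists 1; split; first exact: residues1.
  by apply: (eq_modn_dvd (dvdn_exp2l 2 le_m_e1)); rewrite modnDr.
rewrite /residues /= modn_small; first exact/negP.
have -> : 2 ^ e = 2 ^ e.-1 + 2 ^ e.-1 by rewrite addnn -mul2n -expnS prednK.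
by rewrite ltn_add2r expn2_gt1 // (leq_trans m_gt0 le_m_e1).
Qed.

Lemma is_nX_residues k : e <= k -> 2 ^ (k - e) * size cs = 4 ->
  1 + 2 ^ e.-1 \notin cs -> is_nX X k.
Proof.
move=> le_ek card4 cs_gap; split=> [|m [m_gt0 [sat_m card_m]]].
  split; first exact: leq_trans e_gt0 le_ek.
  by split; [exact: residues_saturated | rewrite card_pi_img_residues ?card4].
rewrite leqNgt; apply/negP => lt_mk; have [lt_me | le_em] := ltnP m e.
  exact: residues_unsaturated sat_m.
have le_mk : 2 ^ (m - e) * 2 <= 2 ^ (k - e).
  by rewrite -expnSr leq_exp2l // ltn_sub2r // (leq_ltn_trans le_em lt_mk).
have := leq_mul le_mk (leqnn (size cs)).
rewrite mulnAC card4 -[4]/(2 * 2) leq_pmul2r // -card_pi_img_residues //.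
by rewrite leqNgt card_m.
Qed.

Lemma index_in_units_residues k : 2 < k -> e <= k -> 2 ^ (k - e) * size cs = 4 ->
  index_in_units k X = 2 ^ (k - 3).
Proof.
move=> k_gt2 le_ek card4.
have X_odd x : X x -> odd x by apply: residues_odd.
have := card_pi_img_mul_index (ltnW (ltnW k_gt2)) residues1 residuesM X_odd.
rewrite card_pi_img_residues // card4 (_ : k - 1 = (k - 3).+2) ?expnS; last lia.
by move: (index_in_units k X) (2 ^ (k - 3)) => i t; lia.
Qed.

End ResidueSets.

Lemma modn_eq_residue x N c : c < N -> x %% N = c <-> exists k, x = c + N * k.
Proof.
move=> lt_cN; split=> [x_c | [k ->]]; last by rewrite addnC mulnC modnMDl modn_small.
by exists (x %/ N); rewrite {1}(divn_eq x N) x_c addnC mulnC.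
Qed.

Lemma residues1E e c : c < 2 ^ e ->
  residues e [:: c] = [set x | exists k, x = c + 2 ^ e * k].
Proof.
move=> lt_c; apply/funext => x; apply/propext; rewrite /residues /= inE.
by rewrite -(modn_eq_residue x lt_c); split=> /eqP.
Qed.

Lemma residues2E e c d : c < 2 ^ e -> d < 2 ^ e ->
  residues e [:: c; d] = [set x | exists k, x = c + 2 ^ e * k \/ x = d + 2 ^ e * k].
Proof.
move=> lt_c lt_d; apply/funext => x; apply/propext; rewrite /residues /= !inE.
split=> [/orP[/eqP | /eqP] | [k [x_c | x_d]]].
- by case/(modn_eq_residue x lt_c) => k ->; exists k; left.
- by case/(modn_eq_residue x lt_d) => k ->; exists k; right.
- by apply/orP; left; apply/eqP/(modn_eq_residue x lt_c); exists k.
- by apply/orP; right; apply/eqP/(modn_eq_residue x lt_d); exists k.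
Qed.

Lemma exp2_subn1_sqr n : 0 < n -> (2 ^ n - 1) ^ 2 = 1 + 2 ^ n.+1 * (2 ^ n.-1 - 1).
Proof.
move=> n_gt0; rewrite -mulnn expnS.
have -> : 2 ^ n = 2 * 2 ^ n.-1 by rewrite -expnS prednK.
by have := expn_gt0 2 n.-1; move: (2 ^ n.-1) => t; nia.
Qed.

Lemma exp2_subn1_lt n : 2 ^ n - 1 < 2 ^ n.+1.
Proof. by rewrite expnS; have := expn_gt0 2 n; move: (2 ^ n) => t; lia. Qed.

Lemma exp2_subn1_mul_closed n : 0 < n ->
  {in [:: 1; 2 ^ n - 1] &, forall c d, c * d %% 2 ^ n.+1 \in [:: 1; 2 ^ n - 1]}.
Proof.
move=> n_gt0; have lt_1 := expn2_gt1 (ltn0Sn n); have lt_b := exp2_subn1_lt n.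
have bb : (2 ^ n - 1) * (2 ^ n - 1) %% 2 ^ n.+1 = 1.
  by rewrite mulnn exp2_subn1_sqr // addnC mulnC modnMDl modn_small.
move=> c d /[!inE] /orP[]/eqP-> /orP[]/eqP->;
  by rewrite ?mul1n ?muln1 ?bb ?modn_small ?eqxx ?orbT.
Qed.

Lemma adic_closure_powers_exp2_subn1 n : 2 <= n ->
  adic_closure (powers (2 ^ n - 1)) = residues n.+1 [:: 1; 2 ^ n - 1].
Proof.
move=> n_ge2; have n_gt0 : 0 < n := ltnW n_ge2.
apply: adic_closure_powers_sqrt (exp2_subn1_lt n) (exp2_subn1_sqr n_gt0) => //.
by rewrite oddB ?expn_gt0 // odd_exp2 // -ltnS prednK.
Qed.

Theorem lemma4p7 (n : nat) : (2 <= n)%N ->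
  (adic_closure (powers (1 + 2 ^ n)) = [set x | exists k, x = 1 + 2 ^ n * k]
   /\ exists k, is_nX (adic_closure (powers (1 + 2 ^ n))) k /\
        index_in_units k (adic_closure (powers (1 + 2 ^ n))) = 2 ^ (n - 1))
  /\
  (adic_closure (powers (2 ^ n - 1)) =
     [set x | exists k, x = 1 + 2 ^ n.+1 * k \/ x = 2 ^ n - 1 + 2 ^ n.+1 * k]
   /\ exists k, is_nX (adic_closure (powers (2 ^ n - 1))) k /\
        index_in_units k (adic_closure (powers (2 ^ n - 1))) = 2 ^ (n - 1)).
Proof.
move=> n_ge2; have n_gt0 : 0 < n := ltnW n_ge2.
have lt_1 : 1 < 2 ^ n := expn2_gt1 n_gt0.
have := adic_closure_powers_1_addM n_ge2 (isT : odd 1); rewrite muln1 => ->.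
rewrite adic_closure_powers_exp2_subn1 //.
have cs1_mul : {in [:: 1] &, forall c d, c * d %% 2 ^ n \in [:: 1]}.
  by move=> c d /[!inE] /eqP-> /eqP->; rewrite modn_small.
have b_odd : odd (2 ^ n - 1) by rewrite oddB ?expn_gt0 // odd_exp2.
have [gap1 gap2 b_ne1] : [/\ 1 + 2 ^ n.-1 \notin [:: 1], 1 + 2 ^ n \notin [:: 1; 2 ^ n - 1]
    & 1 \notin [:: 2 ^ n - 1]].
  have le4 : 4 <= 2 ^ n by rewrite -[4]/(2 ^ 2) leq_exp2l.
  have : 0 < 2 ^ n.-1 by rewrite expn_gt0.
  by move: (2 ^ n.-1) (2 ^ n) le4 => s t le4 s_gt0; split; rewrite !inE; lia.
split; split.
- exact: residues1E.
- exists n.+2; split; [apply: is_nX_residues | apply: index_in_units_residues];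
    by rewrite //= ?lt_1 ?leqW ?subSn ?subnn.
- exact: residues2E (expn2_gt1 _) (exp2_subn1_lt n).
- exists n.+2; split; [apply: is_nX_residues | apply: index_in_units_residues];
    rewrite //= ?b_ne1 ?b_odd ?expn2_gt1 ?exp2_subn1_lt ?subSS ?subSnn //.
  exact: exp2_subn1_mul_closed.
Qed.
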